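(* Let $\ell$ be a prime number and $n\ge1$. Then the number $s_{\ell,n}$ of switching equivalence classes in $\mathrm{Alt}_n(\mathbb{Z}/\ell\mathbb{Z})$ equals the number $t_{\ell,n}$ of isomorphism classes of modular Eulerian matrices in $\mathrm{Alt}_n(\mathbb{Z}/\ell\mathbb{Z})$.
   Context: $\mathrm{Alt}_n(\mathbb{Z}/\ell\mathbb{Z})$ is the set of $n\times n$ matrices $M=(m_{ij})$ over $\mathbb{Z}/\ell\mathbb{Z}$ with $m_{ii}=0$ and $m_{ij}+m_{ji}=0$. For $v\in[n]$ let $X_v$ be the matrix with $(X_v)_{iv}=1$ and $(X_v)_{vi}=-1$ for all $i\ne v$ and all other entries $0$; the switching at $v$ is $\mu_v(M)=M+X_v$. $M\cong M'$ means there is $\sigma\in\mathfrak{S}_n$ with $m'_{\sigma(i)\sigma(j)}=m_{ij}$ for all $i,j$. $M,M'$ are switching equivalent if there are positive integers $i_1,\dots,i_n$ with $M'\cong\mu_1^{i_1}\cdots\mu_n^{i_n}(M)$. $M$ is a modular Eulerian matrix if $\sum_{j=1}^n m_{ij}=0$ in $\mathbb{Z}/\ell\mathbb{Z}$ for every $i$. *)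

From Stdlib Require Import ClassicalEpsilon.
From mathcomp Require Import all_boot all_order all_algebra all_fingroup.
Set Implicit Arguments. Unset Strict Implicit. Unset Printing Implicit Defensive.
Import GRing.Theory.
Local Open Scope ring_scope.

(* Matrices over Z/lZ are 'M['Z_l]_n; for l prime (l >= 2) 'Z_l is Z/lZ. *)

Definition is_alt (l n : nat) (M : 'M['Z_l]_n) : bool :=
  [forall i, M i i == 0] && [forall i, forall j, M i j + M j i == 0].

Definition Xsw (l n : nat) (v : 'I_n) : 'M['Z_l]_n :=
  \matrix_(i, j) (if (j == v) && (i != v) then 1
                  else if (i == v) && (j != v) then -1 else 0).

Definition mu (l n : nat) (v : 'I_n) (M : 'M['Z_l]_n) : 'M['Z_l]_n :=
  M + Xsw l v.

Definition switch_all (l n : nat) (k : 'I_n -> nat) (M : 'M['Z_l]_n) :=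
  foldr (fun v N => iter (k v) (@mu l n v) N) M (enum 'I_n).

Definition mx_iso (l n : nat) (M M' : 'M['Z_l]_n) : Prop :=
  exists s : 'S_n, forall i j, M' (s i) (s j) = M i j.

Definition switch_equiv (l n : nat) (M M' : 'M['Z_l]_n) : Prop :=
  exists k : 'I_n -> nat, (forall v, (0 < k v)%N) /\ mx_iso (switch_all k M) M'.

Definition is_eulerian (l n : nat) (M : 'M['Z_l]_n) : bool :=
  [forall i, \sum_j M i j == 0].

Definition asb (P : Prop) : bool :=
  if excluded_middle_informative P then true else false.

Definition s_count (l n : nat) : nat :=
  #|[set [set M' : 'M['Z_l]_n | is_alt M' && asb (switch_equiv M M')]
     | M in [set M : 'M['Z_l]_n | is_alt M]]|.

Definition t_count (l n : nat) : nat :=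
  #|[set [set M' : 'M['Z_l]_n | is_alt M' && is_eulerian M' && asb (mx_iso M M')]
     | M in [set M : 'M['Z_l]_n | is_alt M && is_eulerian M]]|.

From Stdlib Require Import ClassicalEpsilon.
From mathcomp Require Import all_boot all_order all_algebra all_fingroup.
From mathcomp Require Import zify.
Set Implicit Arguments. Unset Strict Implicit. Unset Printing Implicit Defensive.
Import GRing.Theory.
Local Open Scope ring_scope.

(* Identify Alt_n(F_l) with the coordinate space F_l^N, N = n(n-1)/2.  Since
   the switching vector k only matters modulo l, the switchings move M exactly
   within its coset M + W, where W is the span of the X_v, so switching classes
   are the S_n-orbits on Alt/W.  Row sums of M are the pairings of M with the
   X_v, so Eulerian matrices form the orthogonal complement of W.  By Burnside
   it suffices to show that every permutation s fixes as many cosets of W as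
   Eulerian matrices.  In coordinates s acts by an orthogonal matrix P; the
   fixed cosets, weighted by |W|, are the x with x (1 - P) in W, and the fixed
   Eulerian matrices are the x with x P = x orthogonal to W.  Since the row
   spaces of 1 - P and its transpose coincide, rank-nullity matches the two
   counts. *)

Section RowSpaceCounting.
Variable F : finFieldType.

Lemma card_submx m k (C : 'M[F]_(k, m)) :
  #|[set x : 'rV[F]_m | (x <= C)%MS]| = (#|F| ^ \rank C)%N.
Proof.
have -> : [set x : 'rV[F]_m | (x <= C)%MS] =
          [set y *m row_base C | y in [set: 'rV[F]_(\rank C)]].
  apply/setP => x; rewrite inE; apply/idP/imsetP.
    move=> xC; have: (x <= row_base C)%MS by rewrite eq_row_base.
    by case/submxP=> y ->; exists y; rewrite ?inE.
  by move=> [y _ ->]; rewrite -(eq_row_base C) submxMl.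
rewrite card_imset; last exact: row_free_inj (row_base_free C).
by rewrite cardsT card_mx mul1n.
Qed.

Lemma kermx_cokermx m k (B : 'M[F]_(k, m)) : (kermx (cokermx B) :=: B)%MS.
Proof. by apply/eqmxP/andP; split; apply/rV_subP => v; rewrite sub_kermx submxE. Qed.

Lemma card_preimage_orthogonal m k (P : 'M[F]_m) (B : 'M[F]_(k, m)) :
  P^T *m P = 1 ->
  #|[set x : 'rV[F]_m | (x *m (1 - P) <= B)%MS]| =
  (#|[set x : 'rV[F]_m | (x <= B)%MS]| *
   #|[set x : 'rV[F]_m | (x *m P == x) && (x *m B^T == 0%R)]|)%N.
Proof.
move=> orthP; set T := 1 - P.
have -> : [set x : 'rV[F]_m | (x *m T <= B)%MS] =
          [set x : 'rV[F]_m | (x <= kermx (T *m cokermx B))%MS].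
  by apply/setP => x; rewrite !inE sub_kermx submxE -mulmxA.
have -> : [set x : 'rV[F]_m | (x *m P == x) && (x *m B^T == 0%R)] =
          [set x : 'rV[F]_m | (x <= kermx (row_mx T B^T))%MS].
  apply/setP => x; rewrite !inE sub_kermx mul_mx_row row_mx_eq0.
  by rewrite /T mulmxBr mulmx1 subr_eq0 eq_sym.
rewrite !card_submx !mxrank_ker -expnD; congr (_ ^ _)%N.
have rank_mul := mxrank_mul_ker T (cokermx B).
rewrite (cap_eqmx (eqmx_refl T) (kermx_cokermx B)) in rank_mul.
have rank_sum := mxrank_sum_cap T B.
have eqTt : (T^T == T)%MS.
  have subTt : (T^T <= T)%MS.
    have -> : T^T = (- P^T) *m T.
      by rewrite /T mulNmx mulmxBr mulmx1 orthP opprB linearB /= trmx1.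
    exact: submxMl.
  by apply/andP; split=> //; rewrite -(mxrank_leqif_sup subTt).2 mxrank_tr.
have rank_row : \rank (row_mx T B^T) = \rank (T + B)%MS.
  rewrite -mxrank_tr tr_row_mx trmxK -addsmxE.
  by rewrite (adds_eqmx (eqmxP eqTt) (eqmx_refl B)).
have := rank_leq_row (row_mx T B^T); move: rank_mul rank_sum; rewrite rank_row.
set a := \rank (T *m _); set b := \rank (T :&: B)%MS.
set c := \rank (T + B)%MS; set d := \rank T; set e := \rank B.
by clearbody a b c d e; lia.
Qed.

End RowSpaceCounting.

Lemma card_imset_eqrel (T U V : finType) (D : {set T}) (f : T -> U) (g : T -> V) :
  {in D &, forall x y, (f x == f y) = (g x == g y)} -> #|f @: D| = #|g @: D|.
Proof.
move=> eq_fg; pose fg x := (f x, g x).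
have -> : f @: D = fst @: (fg @: D) by rewrite -imset_comp.
have -> : g @: D = snd @: (fg @: D) by rewrite -imset_comp.
rewrite (card_in_imset (f := fst)) ?(card_in_imset (f := snd)) //.
  move=> _ _ /imsetP[x xD ->] /imsetP[y yD ->] /= Egxy.
  by have := eq_fg x y xD yD; rewrite Egxy eqxx => /eqP Efxy; rewrite /fg Efxy Egxy.
move=> _ _ /imsetP[x xD ->] /imsetP[y yD ->] /= Efxy.
by have := eq_fg x y xD yD; rewrite Efxy eqxx => /esym/eqP Egxy; rewrite /fg Efxy Egxy.
Qed.

Section AlternatingMatrices.
Variables p n : nat.
Local Notation F := 'F_p.

Definition alt_pairs := [set q : 'I_n * 'I_n | (q.1 < q.2)%N].
Local Notation N := #|alt_pairs|.

Definition pair_of (k : 'I_N) : 'I_n * 'I_n := enum_val k.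

Lemma pair_of_lt k : ((pair_of k).1 < (pair_of k).2)%N.
Proof. by have := enum_valP k; rewrite inE. Qed.

Definition alt_basis (k : 'I_N) (i j : 'I_n) : F :=
  (pair_of k == (i, j))%:R - (pair_of k == (j, i))%:R.

Definition alt_of_row (x : 'rV[F]_N) : 'M[F]_n :=
  \matrix_(i, j) \sum_k x 0 k * alt_basis k i j.

Definition row_of_alt (M : 'M[F]_n) : 'rV[F]_N :=
  \row_k M (pair_of k).1 (pair_of k).2.

Definition pair_coef (x : 'rV[F]_N) q := \sum_k x 0 k * (pair_of k == q)%:R.

Lemma alt_of_rowE x i j : alt_of_row x i j = pair_coef x (i, j) - pair_coef x (j, i).
Proof.
by rewrite mxE /pair_coef -sumrB; apply: eq_bigr => k _; rewrite /alt_basis mulrBr.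
Qed.

Lemma pair_coef_in x q (qP : q \in alt_pairs) : pair_coef x q = x 0 (enum_rank_in qP q).
Proof.
rewrite /pair_coef (bigD1 (enum_rank_in qP q)) //= /pair_of enum_rankK_in // eqxx.
rewrite mulr1 big1 ?addr0 // => k kq; case: eqP; rewrite ?mulr0 // => Ekq.
by case/eqP: kq; apply: enum_val_inj; rewrite enum_rankK_in.
Qed.

Lemma pair_coef_out x q : q \notin alt_pairs -> pair_coef x q = 0.
Proof.
move=> qP; rewrite /pair_coef big1 // => k _; case: eqP; rewrite ?mulr0 // => Ekq.
by case/negP: qP; rewrite -Ekq enum_valP.
Qed.

Lemma alt_of_rowK : cancel alt_of_row row_of_alt.
Proof.
move=> x; apply/rowP => k; rewrite mxE alt_of_rowE -surjective_pairing.
rewrite (pair_coef_in x (enum_valP k)) /pair_of enum_valK_in.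
by rewrite pair_coef_out ?subr0 // inE /= -leqNgt ltnW // pair_of_lt.
Qed.

Lemma alt_of_row_inj : injective alt_of_row.
Proof. exact: can_inj alt_of_rowK. Qed.

Lemma is_altP (M : 'M[F]_n) :
  reflect ((forall i, M i i = 0) /\ (forall i j, M i j + M j i = 0)) (is_alt M).
Proof.
apply: (iffP andP) => [[/forallP diag0 /forallP skew] | [diag0 skew]]; split.
- by move=> i; apply/eqP.
- by move=> i j; apply/eqP; have /forallP := skew i; apply.
- by apply/forallP => i; rewrite diag0.
- by apply/forallP => i; apply/forallP => j; rewrite skew.
Qed.

Lemma alt_of_row_alt x : is_alt (alt_of_row x).
Proof.
apply/is_altP; split=> [i|i j]; rewrite !alt_of_rowE ?subrr //.
by rewrite addrC subrKA subrr.
Qed.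

Lemma row_of_altK M : is_alt M -> alt_of_row (row_of_alt M) = M.
Proof.
case/is_altP => diag0 skew; apply/matrixP => i j; rewrite alt_of_rowE.
have [ij|ji|/val_inj->] := ltngtP i j.
- have qP : (i, j) \in alt_pairs by rewrite inE.
  rewrite (pair_coef_in _ qP) pair_coef_out ?subr0; last by rewrite inE /= -leqNgt ltnW.
  by rewrite mxE /pair_of enum_rankK_in.
- have qP : (j, i) \in alt_pairs by rewrite inE.
  rewrite (pair_coef_in _ qP) pair_coef_out ?sub0r; last by rewrite inE /= -leqNgt ltnW.
  rewrite mxE /pair_of enum_rankK_in //=; apply/eqP; rewrite eq_sym -addr_eq0.
  by rewrite addrC skew.
- by rewrite subrr diag0.
Qed.

Lemma row_of_altD M1 M2 : row_of_alt (M1 + M2) = row_of_alt M1 + row_of_alt M2.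
Proof. by apply/rowP => k; rewrite !mxE. Qed.

Lemma row_of_altN M : row_of_alt (- M) = - row_of_alt M.
Proof. by apply/rowP => k; rewrite !mxE. Qed.

Lemma altD (M1 M2 : 'M[F]_n) : is_alt M1 -> is_alt M2 -> is_alt (M1 + M2).
Proof.
move=> /is_altP[a1 a2] /is_altP[b1 b2]; apply/is_altP; split=> [i|i j]; rewrite !mxE.
  by rewrite a1 b1 addr0.
by rewrite addrACA a2 b2 addr0.
Qed.

Lemma altN (M : 'M[F]_n) : is_alt M -> is_alt (- M).
Proof.
move=> /is_altP[a1 a2]; apply/is_altP; split=> [i|i j]; rewrite !mxE.
  by rewrite a1 oppr0.
by rewrite -opprD a2 oppr0.
Qed.

Lemma card_alt_set (Q : pred 'M[F]_n) :
  #|[set M | is_alt M && Q M]| = #|[set x : 'rV[F]_N | Q (alt_of_row x)]|.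
Proof.
rewrite -(card_imset _ alt_of_row_inj); congr (#|pred_of_set _|).
apply/setP => M; rewrite inE; apply/andP/imsetP => [[aM QM]|[x]].
  by exists (row_of_alt M); rewrite ?inE row_of_altK.
by rewrite inE => Qx ->; split=> //; apply: alt_of_row_alt.
Qed.

Definition permx (M : 'M[F]_n) (s : {perm 'I_n}) : 'M[F]_n :=
  \matrix_(i, j) M ((s^-1)%g i) ((s^-1)%g j).

Lemma permx1 : permx^~ 1%g =1 id.
Proof. by move=> M; apply/matrixP => i j; rewrite mxE invg1 !perm1. Qed.

Lemma permxM M : act_morph permx M.
Proof. by move=> a b; apply/matrixP => i j; rewrite !mxE invMg !permM. Qed.

Definition permx_action := TotalAction permx1 permxM.

Lemma permx_actionE M s : permx_action M s = permx M s.
Proof. by []. Qed.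

Lemma permx_alt M s : is_alt M -> is_alt (permx M s).
Proof. by case/is_altP => diag0 skew; apply/is_altP; split=> [i|i j]; rewrite !mxE. Qed.

Lemma permxD M1 M2 s : permx (M1 + M2) s = permx M1 s + permx M2 s.
Proof. by apply/matrixP => i j; rewrite !mxE. Qed.

Lemma permxN M s : permx (- M) s = - permx M s.
Proof. by apply/matrixP => i j; rewrite !mxE. Qed.

Lemma permxK M s : permx (permx M s) (s^-1)%g = M.
Proof. by rewrite -permxM mulgV permx1. Qed.

Lemma permxKV M s : permx (permx M (s^-1)%g) s = M.
Proof. by rewrite -permxM mulVg permx1. Qed.

Lemma mx_isoE (M M' : 'M[F]_n) : mx_iso M M' <-> exists s, M' = permx M s.
Proof.
split=> [[s Es]|[s ->]]; exists s.
  by apply/matrixP => i j; rewrite mxE -Es !permKV.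
by move=> i j; rewrite mxE !permK.
Qed.

Definition perm_coord_mx (s : {perm 'I_n}) : 'M[F]_N :=
  \matrix_(k, k') alt_basis k ((s^-1)%g (pair_of k').1) ((s^-1)%g (pair_of k').2).

Lemma row_of_alt_permx x s :
  row_of_alt (permx (alt_of_row x) s) = x *m perm_coord_mx s.
Proof. by apply/rowP => k; rewrite !mxE; apply: eq_bigr => k' _; rewrite !mxE. Qed.

Lemma permx_alt_of_row x s : permx (alt_of_row x) s = alt_of_row (x *m perm_coord_mx s).
Proof. by rewrite -row_of_alt_permx row_of_altK //; apply/permx_alt/alt_of_row_alt. Qed.

Lemma tr_perm_coord_mx s : (perm_coord_mx s)^T = perm_coord_mx (s^-1)%g.
Proof.
apply/matrixP => k k'; rewrite !mxE /alt_basis invgK.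
case: (pair_of k) (pair_of k') => [a b] [c d].
rewrite !xpair_eqE -!(canF_eq (permK s)) /= (eq_sym a) (eq_sym b).
by rewrite (eq_sym a (s d)) (eq_sym b (s c)) [(s d == a) && _]andbC.
Qed.

Lemma perm_coord_mx_orthogonal s : (perm_coord_mx s)^T *m perm_coord_mx s = 1.
Proof.
rewrite tr_perm_coord_mx; apply/row_matrixP => k.
by rewrite row1 rowE mulmxA -row_of_alt_permx -permx_alt_of_row permxKV alt_of_rowK.
Qed.

Local Notation X := (@Xsw (pdiv p) n).

Lemma XswE v i j : X v i j = (j == v)%:R - (i == v)%:R.
Proof.
rewrite mxE; case: (eqVneq j v) => jv; case: (eqVneq i v) => iv //=;
  by rewrite ?subrr ?subr0 ?sub0r // -jv iv.
Qed.

Lemma permx_Xsw v s : permx (X v) s = X (s v).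
Proof. by apply/matrixP => i j; rewrite mxE !XswE !(canF_eq (permKV s)). Qed.

Definition switch_sum (c : 'rV[F]_n) : 'M[F]_n := \sum_v c 0 v *: X v.

Lemma switch_sumE c i j : switch_sum c i j = \sum_v c 0 v * X v i j.
Proof. by rewrite /switch_sum summxE; apply: eq_bigr => v _; rewrite mxE. Qed.

Lemma switch_sum_alt c : is_alt (switch_sum c).
Proof.
apply/is_altP; split=> [i|i j]; rewrite !switch_sumE.
  by rewrite big1 // => v _; rewrite XswE subrr mulr0.
rewrite -big_split big1 //= => v _; rewrite -mulrDr !XswE.
by rewrite addrC subrKA subrr mulr0.
Qed.

Lemma switch_sumD c1 c2 : switch_sum (c1 + c2) = switch_sum c1 + switch_sum c2.
Proof. by rewrite /switch_sum -big_split; apply: eq_bigr => v _; rewrite mxE scalerDl. Qed.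

Lemma switch_sumN c : switch_sum (- c) = - switch_sum c.
Proof. by rewrite /switch_sum -sumrN; apply: eq_bigr => v _; rewrite mxE scaleNr. Qed.

Lemma switch_sum0 : switch_sum 0 = 0.
Proof. by rewrite /switch_sum big1 // => v _; rewrite mxE scale0r. Qed.

Definition switch_coord_mx : 'M[F]_(n, N) := \matrix_(v, k) row_of_alt (X v) 0 k.

Lemma row_of_switch_sum c : row_of_alt (switch_sum c) = c *m switch_coord_mx.
Proof.
by apply/rowP => k; rewrite !mxE switch_sumE; apply: eq_bigr => v _; rewrite !mxE.
Qed.

Definition switch_space := [set switch_sum c | c : 'rV[F]_n].
Local Notation W := switch_space.

Lemma switch_space_alt w : w \in W -> is_alt w.
Proof. by case/imsetP => c _ ->; apply: switch_sum_alt. Qed.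

Lemma switch_space0 : 0 \in W.
Proof. by apply/imsetP; exists 0; rewrite ?switch_sum0. Qed.

Lemma switch_spaceD w1 w2 : w1 \in W -> w2 \in W -> w1 + w2 \in W.
Proof. by move=> /imsetP[c1 _ ->] /imsetP[c2 _ ->]; rewrite -switch_sumD imset_f. Qed.

Lemma switch_spaceN w : w \in W -> - w \in W.
Proof. by move=> /imsetP[c _ ->]; rewrite -switch_sumN imset_f. Qed.

Lemma switch_spaceE M : is_alt M -> (M \in W) = (row_of_alt M <= switch_coord_mx)%MS.
Proof.
move=> aM; apply/imsetP/idP => [[c _ ->]|].
  by rewrite row_of_switch_sum submxMl.
case/submxP => c Ec; exists c => //.
by rewrite -(row_of_altK aM) -(row_of_altK (switch_sum_alt c)) row_of_switch_sum Ec.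
Qed.

Lemma card_switch_space : #|W| = #|[set x : 'rV[F]_N | (x <= switch_coord_mx)%MS]|.
Proof.
rewrite -(card_in_imset (f := row_of_alt)); last first.
  move=> M1 M2 /switch_space_alt a1 /switch_space_alt a2 E.
  by rewrite -(row_of_altK a1) E row_of_altK.
congr (#|pred_of_set _|); apply/setP => x; rewrite inE; apply/imsetP/idP.
  by move=> [M MW ->]; rewrite -switch_spaceE // switch_space_alt.
by case/submxP => c ->; exists (switch_sum c); rewrite ?imset_f ?row_of_switch_sum.
Qed.

Lemma permx_switch_space w s : w \in W -> permx w s \in W.
Proof.
case/imsetP => c _ ->; apply/imsetP; exists (\row_u c 0 ((s^-1)%g u)) => //.
apply/matrixP => i j; rewrite mxE !switch_sumE (reindex_inj (@perm_inj _ (s^-1)%g)) /=.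
by apply: eq_bigr => v _; rewrite mxE !XswE !(inj_eq (@perm_inj _ _)).
Qed.

(* Row v of M pairs with X v to minus its row sum. *)
Lemma eulerian_alt_of_row x :
  is_eulerian (alt_of_row x) = (x *m switch_coord_mx^T == 0).
Proof.
have row_sumE v : \sum_j alt_of_row x v j = - (x *m switch_coord_mx^T) 0 v.
  rewrite !mxE -sumrN; under eq_bigr => j _ do rewrite mxE.
  rewrite exchange_big /=; apply: eq_bigr => k _.
  rewrite !mxE -mulrN -mulr_sumr; congr (_ * _).
  transitivity (- X v (pair_of k).1 (pair_of k).2); last by rewrite mxE.
  rewrite XswE /alt_basis sumrB opprB; case: (pair_of k) => [a b] /=.
  have sum_first (u w : 'I_n) : \sum_(j < n) ((u, w) == (v, j))%:R = (u == v)%:R :> F.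
    rewrite (bigD1 w) //= xpair_eqE eqxx andbT big1 ?addr0 // => j jw.
    by rewrite xpair_eqE [w == j]eq_sym (negbTE jw) andbF.
  have sum_second (u w : 'I_n) : \sum_(j < n) ((u, w) == (j, v))%:R = (w == v)%:R :> F.
    rewrite (bigD1 u) //= xpair_eqE eqxx /= big1 ?addr0 // => j ju.
    by rewrite xpair_eqE [u == j]eq_sym (negbTE ju).
  by rewrite sum_first sum_second.
apply/forallP/eqP => [row0|row0 v]; last by rewrite row_sumE row0 mxE oppr0.
by apply/rowP => v; rewrite [RHS]mxE; apply/eqP; rewrite -oppr_eq0 -row_sumE.
Qed.

Lemma permx_eulerian M s : is_eulerian M -> is_eulerian (permx M s).
Proof.
move=> /forallP row0; apply/forallP => i; under eq_bigr => j _ do rewrite mxE.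
by have := row0 ((s^-1)%g i); rewrite (reindex_inj (@perm_inj _ (s^-1)%g)).
Qed.

Definition switch_class (M : 'M[F]_n) := [set M + w | w in W].

Lemma mem_switch_class M M' : (M' \in switch_class M) = (M' - M \in W).
Proof.
apply/imsetP/idP => [[w wW ->]|MW]; first by rewrite addrC addKr.
by exists (M' - M) => //; rewrite addrC subrK.
Qed.

Lemma eq_switch_class M M' : (switch_class M == switch_class M') = (M - M' \in W).
Proof.
apply/eqP/idP => [E|MW].
  by rewrite -mem_switch_class -E mem_switch_class subrr switch_space0.
apply/setP => y; rewrite !mem_switch_class; apply/idP/idP => yW.
  by rewrite -(subrKA M y (- M')) switch_spaceD.
by rewrite -(subrKA M' y (- M)) -(opprB M) switch_spaceD ?switch_spaceN.
Qed.

Lemma setact_switch_class M s :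
  setact permx_action (switch_class M) s = switch_class (permx M s).
Proof.
apply/setP => y; rewrite mem_switch_class; apply/imsetP/idP => [[z]|yW].
  by rewrite mem_switch_class => zW ->; rewrite -permxN -permxD permx_switch_space.
exists (permx y (s^-1)%g); last by rewrite permx_actionE permxKV.
by rewrite mem_switch_class -(permxK M s) -permxN -permxD permx_switch_space.
Qed.

Lemma iter_mu v k M : iter k (@mu (pdiv p) n v) M = M + k%:R *: X v.
Proof.
elim: k => [|k IHk]; first by rewrite scale0r addr0.
by rewrite iterS IHk /mu -addrA mulrSr scalerDl scale1r.
Qed.

Lemma switch_allE (k : 'I_n -> nat) M :
  switch_all k M = M + switch_sum (\row_v (k v)%:R).
Proof.
rewrite /switch_all /switch_sum.
have -> : \sum_v (\row_v (k v)%:R : 'rV[F]_n) 0 v *: X v =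
          \sum_(v <- enum 'I_n) (k v)%:R *: X v.
  by rewrite enumT; apply: eq_bigr => v _; rewrite mxE.
elim: (enum 'I_n) => [|v s IHs] /=; first by rewrite big_nil addr0.
by rewrite big_cons iter_mu IHs -addrA [_ *: _ + _]addrC.
Qed.

Lemma asbE (P : Prop) : asb P <-> P.
Proof. by rewrite /asb; case: excluded_middle_informative. Qed.

Local Notation G := [set: {perm 'I_n}].

Lemma switch_equivE M M' : is_alt M -> is_alt M' ->
  switch_equiv M M' <->
  switch_class M' \in orbit (permx_action^*)%act G (switch_class M).
Proof.
move=> aM aM'; split.
  case=> k [_ /mx_isoE[s ->]]; apply/orbitP; exists s; rewrite ?inE //=.
  rewrite setact_switch_class switch_allE permxD; apply/eqP.
  rewrite eq_switch_class opprD addNKr switch_spaceN ?permx_switch_space //.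
  exact: imset_f.
case/orbitP => s _; rewrite /= setact_switch_class => /eqP.
rewrite eq_switch_class => /switch_spaceN; rewrite opprB.
move=> /(permx_switch_space (s^-1)%g) /imsetP[c _ Ec].
(* Switching counts only matter modulo the characteristic, so adding it to the
   coordinates of c makes them positive, as switch_equiv requires. *)
exists (fun v => addn (c 0 v) (Zp_trunc (pdiv p)).+2).
split=> [v|]; first by rewrite addnS.
apply/mx_isoE; exists s; rewrite switch_allE.
have -> : (\row_v (addn (c 0 v) (Zp_trunc (pdiv p)).+2)%:R : 'rV[F]_n) = c.
  by apply/rowP => v; rewrite mxE; apply/val_inj; rewrite Zp_nat /= modnDr modn_small.
by rewrite -Ec permxD permxKV addrC subrK.
Qed.

Definition eulerian_set := [set M : 'M[F]_n | is_alt M && is_eulerian M].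
Definition class_set := [set switch_class M | M in [set M | is_alt M]].

Lemma mem_eulerian_set_permx M s : (permx M s \in eulerian_set) = (M \in eulerian_set).
Proof.
rewrite !inE; apply/idP/idP => /andP[aM eM].
  by rewrite -(permxK M s) (permx_alt _ aM) (permx_eulerian _ eM).
by rewrite (permx_alt _ aM) (permx_eulerian _ eM).
Qed.

Lemma acts_eulerian_set : [acts G, on eulerian_set | permx_action].
Proof. by apply/actsP => s _ M; apply: mem_eulerian_set_permx. Qed.

Lemma acts_class_set : [acts G, on class_set | (permx_action^*)%act].
Proof.
apply/actsP => s _ C /=; apply/imsetP/imsetP => [[M aM EC]|[M aM ->]].
  exists (permx M (s^-1)%g); first by rewrite inE permx_alt // -inE.
  by rewrite -setact_switch_class -EC (actK (permx_action^*)%act).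
by exists (permx M s); rewrite ?setact_switch_class // inE permx_alt // -inE.
Qed.

Lemma t_count_orbits : t_count (pdiv p) n = #|orbit permx_action G @: eulerian_set|.
Proof.
rewrite /t_count; congr (#|pred_of_set _|); apply: eq_in_imset => M.
rewrite inE => /andP[aM eM]; apply/setP => M'; rewrite !inE; apply/idP/idP.
  by case/andP => /andP[_ _] /asbE /mx_isoE[s ->]; apply/orbitP; exists s.
case/orbitP => s _ <-; rewrite permx_actionE.
have := mem_eulerian_set_permx M s; rewrite !inE aM eM => /andP[-> ->] /=.
by apply/asbE/mx_isoE; exists s.
Qed.

Lemma s_count_orbits : s_count (pdiv p) n = #|orbit (permx_action^*)%act G @: class_set|.
Proof.
rewrite /s_count /class_set -imset_comp; apply: card_imset_eqrel => M M'.
rewrite !inE => aM aM'.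
have classE M0 : is_alt M0 ->
    [set M1 | is_alt M1 && asb (switch_equiv M0 M1)] =
    [set M1 | is_alt M1 &&
       (switch_class M1 \in orbit (permx_action^*)%act G (switch_class M0))].
  move=> aM0; apply/setP => M1; rewrite !inE; case aM1: (is_alt M1) => //=.
  apply/idP/idP => [/asbE/switch_equivE|]; first by apply.
  by move=> ?; apply/asbE/switch_equivE.
rewrite /= !classE //; apply/eqP/eqP => [E|->] //.
have : M \in [set M1 | is_alt M1 &&
         (switch_class M1 \in orbit (permx_action^*)%act G (switch_class M))].
  by rewrite inE aM orbit_refl.
by rewrite E inE aM => /orbit_eqP ->.
Qed.

Lemma card_fixed_classes s :
  (#|('Fix_(class_set | (permx_action^*)%act)[s])%g| * #|W|)%N =
  #|[set M | is_alt M && (M - permx M s \in W)]|.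
Proof.
symmetry; rewrite -sum1_card.
rewrite (partition_big switch_class (mem ('Fix_(class_set | (permx_action^*)%act)[s])%g)) /=.
  rewrite -sum_nat_const; apply: eq_bigr => _ /setIP[/imsetP[M0 aM0 ->] fixM0].
  rewrite sum1dep_card -(card_imset W (addrI M0)).
  congr (#|pred_of_set _|); apply/setP => M; rewrite !inE; apply/idP/idP.
    case/andP => /andP[aM _] /eqP EM; apply/imsetP; exists (M - M0).
      by rewrite -mem_switch_class -EM mem_switch_class subrr switch_space0.
    by rewrite addrC subrK.
  case/imsetP => w wW ->; rewrite inE in aM0.
  have classM : switch_class (M0 + w) = switch_class M0.
    by apply/eqP; rewrite eq_switch_class addrC addKr.
  rewrite (altD aM0 (switch_space_alt wW)) classM eqxx andbT.
  move/afix1P: fixM0; rewrite -classM /= setact_switch_class => /eqP.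
  by rewrite eq_switch_class -opprB => /switch_spaceN; rewrite opprK.
move=> M; rewrite inE => /andP[aM MW]; rewrite inE; apply/andP; split.
  by apply/imsetP; exists M; rewrite ?inE.
apply/afix1P; rewrite /= setact_switch_class; apply/eqP.
by rewrite eq_switch_class -opprB switch_spaceN.
Qed.

Lemma card_almost_fixed s :
  #|[set M | is_alt M && (M - permx M s \in W)]| =
  #|[set x : 'rV[F]_N | (x *m (1 - perm_coord_mx s) <= switch_coord_mx)%MS]|.
Proof.
rewrite card_alt_set; congr (#|pred_of_set _|); apply/setP => x; rewrite !inE.
rewrite permx_alt_of_row switch_spaceE; last by rewrite altD ?altN ?alt_of_row_alt.
by rewrite row_of_altD row_of_altN !alt_of_rowK mulmxBr mulmx1.
Qed.

Lemma card_fixed_eulerian s :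
  #|('Fix_(eulerian_set | permx_action)[s])%g| =
  #|[set x : 'rV[F]_N |
     (x *m perm_coord_mx s == x) && (x *m switch_coord_mx^T == 0)]|.
Proof.
have -> : ('Fix_(eulerian_set | permx_action)[s])%g =
          [set M | is_alt M && (is_eulerian M && (permx M s == M))].
  by apply/setP => M; rewrite !inE -andbA sub1set inE.
rewrite card_alt_set; congr (#|pred_of_set _|); apply/setP => x; rewrite !inE.
by rewrite eulerian_alt_of_row permx_alt_of_row (inj_eq alt_of_row_inj) andbC.
Qed.

Lemma s_count_eq_t_count : s_count (pdiv p) n = t_count (pdiv p) n.
Proof.
apply/eqP; rewrite -(eqn_pmul2r (cardG_gt0 [set: {perm 'I_n}]%G)).
rewrite s_count_orbits t_count_orbits.
rewrite -(Frobenius_Cauchy acts_class_set) -(Frobenius_Cauchy acts_eulerian_set).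
apply/eqP; apply: eq_bigr => s _.
have W_gt0 : (0 < #|W|)%N by apply/card_gt0P; exists 0; apply: switch_space0.
apply/eqP; rewrite -(eqn_pmul2r W_gt0) card_fixed_classes card_almost_fixed.
rewrite card_preimage_orthogonal ?perm_coord_mx_orthogonal //.
by rewrite card_fixed_eulerian -card_switch_space mulnC.
Qed.

End AlternatingMatrices.

Theorem theorem4p7 (l n : nat) : prime l -> (1 <= n)%N -> s_count l n = t_count l n.
Proof. by move=> l_prime _; rewrite -(pdiv_id l_prime); apply: s_count_eq_t_count. Qed.
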